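(* For every admissible triple $(j_1,j_2,j_3)\in\mathbf J$, the top total-degree part of the Laurent polynomial $\phi_{j_1,j_2,j_3}$ (total degree of $x_{12}^{a}x_{13}^{b}x_{23}^{c}$ being $a+b+c$) has total degree $(j_1+j_2+j_3)/2$ and consists of a single monomial $c\,x_{12}^{d_3}x_{13}^{d_2}x_{23}^{d_1}$ with $c\in\mathbb C\setminus\{0\}$, where $$d_1=\frac{-j_1+j_2+j_3}{2},\quad d_2=\frac{j_1-j_2+j_3}{2},\quad d_3=\frac{j_1+j_2-j_3}{2}.$$
   Context: A triple $(j_1,j_2,j_3)$ of nonnegative integers is admissible if $|j_1-j_2|\le j_3\le j_1+j_2$ and $j_1+j_2+j_3$ is even; $\mathbf J$ denotes the set of admissible triples. Let $\mathcal H=\mathbb C[x_{12}+x_{12}^{-1},x_{13}+x_{13}^{-1},x_{23}+x_{23}^{-1}]\subset\mathbb C[x_{12}^{\pm1},x_{13}^{\pm1},x_{23}^{\pm1}]$. For $a,b\in\{\pm1\}$ set $K_{a,b}(j_1,j_2,j_3)=ab\,\frac{(aj_1+bj_2+j_3+a+b+2)(aj_1+bj_2-j_3+a+b)}{4(j_1+1)(j_2+1)}$. The genus two Schur polynomials $(\phi_{j_1,j_2,j_3})_{(j_1,j_2,j_3)\in\mathbf J}$ are the unique family in $\mathcal H$ with $\phi_{0,0,0}=1$ such that for all admissible $(j_1,j_2,j_3)$: $(x_{12}+x_{12}^{-1})\phi_{j_1,j_2,j_3}=\sum_{a,b\in\{\pm1\}}K_{a,b}(j_1,j_2,j_3)\phi_{j_1+a,j_2+b,j_3}$,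 $(x_{13}+x_{13}^{-1})\phi_{j_1,j_2,j_3}=\sum_{a,b\in\{\pm1\}}K_{a,b}(j_1,j_3,j_2)\phi_{j_1+a,j_2,j_3+b}$, $(x_{23}+x_{23}^{-1})\phi_{j_1,j_2,j_3}=\sum_{a,b\in\{\pm1\}}K_{a,b}(j_2,j_3,j_1)\phi_{j_1,j_2+a,j_3+b}$, where $\phi$ of a non-admissible triple is interpreted as $0$. *)

From HB Require Import structures.
From mathcomp Require Import all_boot all_order all_algebra.
Set Implicit Arguments. Unset Strict Implicit. Unset Printing Implicit Defensive.
Import Order.TTheory GRing.Theory Num.Theory.
Local Open Scope ring_scope.

(* Laurent polynomials in x12, x13, x23 with coefficients in C, represented
   by their coefficient function: (lp C) f a b c = coefficient of
   x12^a x13^b x23^c.  Elements of H have finite support (see inH). *)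
Definition lp (C : Type) := int -> int -> int -> C.

Section Laurent.
Variable C : numClosedFieldType.

Definition lp0 : lp C := fun _ _ _ => 0.
Definition lp1 : lp C := fun a b c => if (a == 0) && (b == 0) && (c == 0) then 1 else 0.
Definition lpadd (f g : lp C) : lp C := fun a b c => f a b c + g a b c.
Definition lpscale (k : C) (f : lp C) : lp C := fun a b c => k * f a b c.

(* multiplication by x12 + x12^-1, x13 + x13^-1, x23 + x23^-1 *)
Definition mulY12 (f : lp C) : lp C := fun a b c => f (a - 1) b c + f (a + 1) b c.
Definition mulY13 (f : lp C) : lp C := fun a b c => f a (b - 1) c + f a (b + 1) c.
Definition mulY23 (f : lp C) : lp C := fun a b c => f a b (c - 1) + f a b (c + 1).

(* H = C[y12, y13, y23], y_ij = x_ij + x_ij^-1: the C-span of all monomials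
   in the y_ij, i.e. the smallest subspace containing 1 and stable under
   multiplication by each y_ij. *)
Inductive inH : lp C -> Prop :=
| inH_one : inH lp1
| inH_add f g : inH f -> inH g -> inH (lpadd f g)
| inH_scale k f : inH f -> inH (lpscale k f)
| inH_mul12 f : inH f -> inH (mulY12 f)
| inH_mul13 f : inH f -> inH (mulY13 f)
| inH_mul23 f : inH f -> inH (mulY23 f).

Definition admissibleZ (j1 j2 j3 : int) : bool :=
  [&& 0 <= j1, 0 <= j2, 0 <= j3, `|j1 - j2| <= j3, j3 <= j1 + j2
   & ~~ odd (absz (j1 + j2 + j3))].

Definition admissible (j1 j2 j3 : nat) : bool :=
  admissibleZ (Posz j1) (Posz j2) (Posz j3).

Definition Kc (a b j1 j2 j3 : int) : C :=
  ((a * b * (a * j1 + b * j2 + j3 + a + b + 2) * (a * j1 + b * j2 - j3 + a + b))%:~R)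
  / ((4 * (j1 + 1) * (j2 + 1))%:~R).

Definition extZ (phi : nat -> nat -> nat -> lp C) (j1 j2 j3 : int) : lp C :=
  if admissibleZ j1 j2 j3 then phi (absz j1) (absz j2) (absz j3) else lp0.

Definition signs : seq int := [:: 1; -1].

Definition is_genus2_schur (phi : nat -> nat -> nat -> lp C) : Prop :=
  (forall j1 j2 j3, admissible j1 j2 j3 -> inH (phi j1 j2 j3)) /\
  phi 0%N 0%N 0%N = lp1 /\
  (forall j1 j2 j3 : nat, admissible j1 j2 j3 -> forall x y z : int,
     mulY12 (phi j1 j2 j3) x y z =
       \sum_(a <- signs) \sum_(b <- signs)
          Kc a b j1 j2 j3 * extZ phi (Posz j1 + a) (Posz j2 + b) j3 x y z) /\
  (forall j1 j2 j3 : nat, admissible j1 j2 j3 -> forall x y z : int,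
     mulY13 (phi j1 j2 j3) x y z =
       \sum_(a <- signs) \sum_(b <- signs)
          Kc a b j1 j3 j2 * extZ phi (Posz j1 + a) j2 (Posz j3 + b) x y z) /\
  (forall j1 j2 j3 : nat, admissible j1 j2 j3 -> forall x y z : int,
     mulY23 (phi j1 j2 j3) x y z =
       \sum_(a <- signs) \sum_(b <- signs)
          Kc a b j2 j3 j1 * extZ phi j1 (Posz j2 + a) (Posz j3 + b) x y z).
End Laurent.

From HB Require Import structures.
From mathcomp Require Import all_boot all_order all_algebra.
From mathcomp Require Import zify.
Set Implicit Arguments. Unset Strict Implicit. Unset Printing Implicit Defensive.
Import Order.TTheory GRing.Theory Num.Theory.
Local Open Scope ring_scope.

(* Admissible triples are exactly (d2 + d3, d1 + d3, d1 + d2) with d_i >= 0, and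
   then (d3, d2, d1) is the claimed top exponent, of total degree d1 + d2 + d3.
   Induct on d1 + d2 + d3: if, say, d3 > 0, apply the x12-recurrence at the triple
   with d3 lowered by one.  At total degree >= d1 + d2 + d3 every term on the
   right-hand side except phi_{j1+1,j2+1,j3} lies above the top degree of a
   smaller triple, so multiplication by x12 + x12^-1 just shifts the top monomial
   of the smaller triple by x12, and K_{1,1} != 0 transports it to phi. *)

Lemma admissibleZ_param (i1 i2 i3 : int) : admissibleZ i1 i2 i3 ->
  exists d1 d2 d3 : nat,
    [/\ i1 = Posz (d2 + d3), i2 = Posz (d1 + d3) & i3 = Posz (d1 + d2)].
Proof.
rewrite /admissibleZ => adm; pose k := Posz ((absz (i1 + i2 + i3)%R)./2).
by exists (absz (k - i1)), (absz (k - i2)), (absz (k - i3)); rewrite /k; split; lia.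
Qed.

Lemma admissible_param (d1 d2 d3 : nat) : admissible (d2 + d3) (d1 + d3) (d1 + d2).
Proof. rewrite /admissible /admissibleZ; lia. Qed.

Lemma Kc11_neq0 (C : numClosedFieldType) (j1 j2 j3 : int) :
  0 <= j1 -> 0 <= j2 -> 0 <= j3 -> j3 < j1 + j2 + 2 -> Kc C 1 1 j1 j2 j3 != 0.
Proof. by move=> *; rewrite /Kc mulf_neq0 // ?invr_eq0 intr_eq0 !mulf_eq0; lia. Qed.

Section TopMonomial.
Variable C : numClosedFieldType.

Definition top_monomial (f : lp C) (p q r : int) : Prop :=
  f p q r != 0 /\
  forall a b c : int, p + q + r <= a + b + c -> (a, b, c) != (p, q, r) -> f a b c = 0.

Lemma top_monomial_vanish f p q r a b c :
  top_monomial f p q r -> p + q + r < a + b + c -> f a b c = 0.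
Proof.
move=> [_ f_top] lt_pqr_abc; apply: f_top; first exact: ltW.
by apply: contraTneq lt_pqr_abc => -[-> -> ->]; rewrite ltxx.
Qed.

Lemma top_monomial_shift (f g : lp C) (k : C) (p q r u v w : int) :
  top_monomial f p q r -> k != 0 ->
  (forall x y z, p + q + r + (u + v + w) <= x + y + z ->
     k * g x y z = f (x - u) (y - v) (z - w)) ->
  top_monomial g (p + u) (q + v) (r + w).
Proof.
move=> [fpqr f_top] k_neq0 shift; split.
  apply: contra_neq fpqr => g0; rewrite -(mulr0 k) -g0 shift; last lia.
  by rewrite !addrK.
move=> a b c deg_abc neq_abc; apply/eqP; rewrite -(mulrI_eq0 _ (mulfI k_neq0)).
rewrite shift; last lia.
apply/eqP/f_top; first lia.
by apply: contra_neq neq_abc => -[<- <- <-]; rewrite !subrK.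
Qed.

End TopMonomial.

Section GenusTwoSchur.
Variable C : numClosedFieldType.
Variable phi : nat -> nat -> nat -> lp C.
Hypothesis phi_schur : is_genus2_schur phi.

Definition top_at (d1 d2 d3 : nat) : Prop :=
  top_monomial (phi (d2 + d3) (d1 + d3) (d1 + d2)) d3 d2 d1.

Lemma extZ_param (d1 d2 d3 : nat) (i1 i2 i3 : int) :
  i1 = Posz (d2 + d3) -> i2 = Posz (d1 + d3) -> i3 = Posz (d1 + d2) ->
  extZ phi i1 i2 i3 = phi (d2 + d3) (d1 + d3) (d1 + d2).
Proof. by move=> -> -> ->; rewrite /extZ ifT //; apply: admissible_param. Qed.

Lemma top_at0 : top_at 0 0 0.
Proof.
have [_ [phi000 _]] := phi_schur; rewrite /top_at /= phi000.
split=> [|a b c _]; first by rewrite /lp1 eqxx oner_neq0.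
by rewrite /lp1; case: (a =P 0) (b =P 0) (c =P 0) => [->|] // [->|] // [->|].
Qed.

Section Raise.
Variable M : nat.
Hypothesis top_below : forall d1 d2 d3, (d1 + d2 + d3 < M)%N -> top_at d1 d2 d3.

(* the parameters d of an admissible triple i satisfy i1 + i2 + i3 = 2 (d1 + d2 + d3) *)
Lemma extZ_vanish (i1 i2 i3 x y z : int) :
  i1 + i2 + i3 < 2 * Posz M -> i1 + i2 + i3 < 2 * (x + y + z) ->
  extZ phi i1 i2 i3 x y z = 0.
Proof.
rewrite /extZ; case: ifP => [|//].
move=> /admissibleZ_param [d1 [d2 [d3 [-> -> ->]]]] ltM ltxyz.
by apply: top_monomial_vanish; [apply: top_below|]; lia.
Qed.

Lemma top_at_raise3 d1 d2 d3 : (d1 + d2 + d3.+1)%N = M -> top_at d1 d2 d3.+1.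
Proof.
move=> sumM; have [_ [_ [rec12 _]]] := phi_schur.
have top_prev : top_at d1 d2 d3 by apply: top_below; lia.
have K_neq0 : Kc C 1 1 (d2 + d3)%N (d1 + d3)%N (d1 + d2)%N != 0 by apply: Kc11_neq0; lia.
rewrite /top_at (_ : Posz d3.+1 = d3%:Z + 1); last lia.
rewrite -[X in top_monomial _ _ X _]addr0 -[X in top_monomial _ _ _ X]addr0.
apply: (top_monomial_shift top_prev K_neq0) => x y z deg_xyz; rewrite !subr0.
have := rec12 _ _ _ (admissible_param d1 d2 d3) x y z.
rewrite /mulY12 /signs !big_cons !big_nil (@extZ_param d1 d2 d3.+1); try lia.
rewrite !extZ_vanish ?(top_monomial_vanish (a := x + 1) top_prev); try lia.
by rewrite !mulr0 !addr0 => ->.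
Qed.

Lemma top_at_raise2 d1 d2 d3 : (d1 + d2.+1 + d3)%N = M -> top_at d1 d2.+1 d3.
Proof.
move=> sumM; have [_ [_ [_ [rec13 _]]]] := phi_schur.
have top_prev : top_at d1 d2 d3 by apply: top_below; lia.
have K_neq0 : Kc C 1 1 (d2 + d3)%N (d1 + d2)%N (d1 + d3)%N != 0 by apply: Kc11_neq0; lia.
rewrite /top_at (_ : Posz d2.+1 = d2%:Z + 1); last lia.
rewrite -[X in top_monomial _ X _ _]addr0 -[X in top_monomial _ _ _ X]addr0.
apply: (top_monomial_shift top_prev K_neq0) => x y z deg_xyz; rewrite !subr0.
have := rec13 _ _ _ (admissible_param d1 d2 d3) x y z.
rewrite /mulY13 /signs !big_cons !big_nil (@extZ_param d1 d2.+1 d3); try lia.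
rewrite !extZ_vanish ?(top_monomial_vanish (b := y + 1) top_prev); try lia.
by rewrite !mulr0 !addr0 => ->.
Qed.

Lemma top_at_raise1 d1 d2 d3 : (d1.+1 + d2 + d3)%N = M -> top_at d1.+1 d2 d3.
Proof.
move=> sumM; have [_ [_ [_ [_ rec23]]]] := phi_schur.
have top_prev : top_at d1 d2 d3 by apply: top_below; lia.
have K_neq0 : Kc C 1 1 (d1 + d3)%N (d1 + d2)%N (d2 + d3)%N != 0 by apply: Kc11_neq0; lia.
rewrite /top_at (_ : Posz d1.+1 = d1%:Z + 1); last lia.
rewrite -[X in top_monomial _ X _ _]addr0 -[X in top_monomial _ _ X _]addr0.
apply: (top_monomial_shift top_prev K_neq0) => x y z deg_xyz; rewrite !subr0.
have := rec23 _ _ _ (admissible_param d1 d2 d3) x y z.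
rewrite /mulY23 /signs !big_cons !big_nil (@extZ_param d1.+1 d2 d3); try lia.
rewrite !extZ_vanish ?(top_monomial_vanish (c := z + 1) top_prev); try lia.
by rewrite !mulr0 !addr0 => ->.
Qed.

End Raise.

Lemma top_at_all d1 d2 d3 : top_at d1 d2 d3.
Proof.
suff top_lt n : forall d1 d2 d3, (d1 + d2 + d3 < n)%N -> top_at d1 d2 d3.
  exact: top_lt _ _ _ _ (ltnSn _).
elim: n => [//|n IHn] {}d1 {}d2 {}d3.
rewrite ltnS leq_eqVlt => /orP [/eqP sum_n|]; last exact: IHn.
case: d3 sum_n => [|d3] sum_n; last exact: top_at_raise3 IHn _ _ _ sum_n.
case: d2 sum_n => [|d2] sum_n; last exact: top_at_raise2 IHn _ _ _ sum_n.
case: d1 sum_n => [|d1] sum_n; last exact: top_at_raise1 IHn _ _ _ sum_n.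
exact: top_at0.
Qed.

End GenusTwoSchur.

Theorem mainTheorem5 (C : numClosedFieldType) (phi : nat -> nat -> nat -> lp C) :
  is_genus2_schur phi ->
  forall j1 j2 j3 : nat, admissible j1 j2 j3 ->
    let d1 := ((j2 + j3 - j1)./2)%N in
    let d2 := ((j1 + j3 - j2)./2)%N in
    let d3 := ((j1 + j2 - j3)./2)%N in
    phi j1 j2 j3 (Posz d3) (Posz d2) (Posz d1) != 0 /\
    (forall a b c : int,
       Posz ((j1 + j2 + j3)./2)%N <= a + b + c ->
       (a, b, c) != (Posz d3, Posz d2, Posz d1) ->
       phi j1 j2 j3 a b c = 0).
Proof.
move=> phi_schur j1 j2 j3 /admissibleZ_param [d1 [d2 [d3 [[->] [->] [->]]]]].
have [top_nz top_vanish] := top_at_all phi_schur d1 d2 d3.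
have -> : ((d1 + d3 + (d1 + d2) - (d2 + d3))./2 = d1)%N by lia.
have -> : ((d2 + d3 + (d1 + d2) - (d1 + d3))./2 = d2)%N by lia.
have -> : ((d2 + d3 + (d1 + d3) - (d1 + d2))./2 = d3)%N by lia.
split=> // a b c deg_abc; apply: top_vanish; lia.
Qed.
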